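(* Let $n\geq 3$ and let $A$ and $B$ be two $n\times n$ generalized tournament matrices with the same principal minors of orders at most $4$. Suppose that $A$ is separable. If there is no $\alpha>1/2$ such that $A$ and $B$ are both $\alpha$-linear, then $A$ and $B$ have a common nontrivial clan.
   Context: A generalized tournament matrix of order $n$ is a real $n\times n$ matrix $M=(m_{ij})$ with nonnegative entries satisfying $M+M^{t}=J_n-I_n$. Write $[n]=\{1,\ldots,n\}$. A clan of $M$ is a subset $X\subseteq[n]$ such that for all $i,j\in X$ and $k\in[n]\setminus X$, $m_{ik}=m_{jk}$ and $m_{ki}=m_{kj}$; the empty set, singletons and $[n]$ are trivial clans. $M$ is separable if $[n]$ can be partitioned into two nonempty clans. For $\alpha>1/2$, $M$ is $\alpha$-linear if there is an ordering $x_1,\ldots,x_n$ of $[n]$ with $m_{x_ix_j}=\alpha$ whenever $i<j$. *)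

From HB Require Import structures.
From mathcomp Require Import all_boot all_order all_algebra all_fingroup.
Set Implicit Arguments. Unset Strict Implicit. Unset Printing Implicit Defensive.
Import Order.TTheory GRing.Theory Num.Theory.
Local Open Scope ring_scope.

Definition gen_tournament (R : realFieldType) (n : nat) (M : 'M[R]_n) : Prop :=
  (forall i j, 0 <= M i j) /\ M + M^T = const_mx 1 - 1%:M.

(* Principal submatrix indexed by S, rows/columns in increasing order of index. *)
Definition principal_submx (R : ringType) (n : nat) (M : 'M[R]_n)
  (S : {set 'I_n}) : 'M[R]_#|S| :=
  \matrix_(i < #|S|, j < #|S|) M (enum_val i) (enum_val j).

Definition principal_minor (R : comRingType) (n : nat) (M : 'M[R]_n)
  (S : {set 'I_n}) : R := \det (principal_submx M S).

Definition clan (R : ringType) (n : nat) (M : 'M[R]_n) (X : {set 'I_n}) : Prop :=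
  forall i j k, i \in X -> j \in X -> k \notin X ->
    M i k = M j k /\ M k i = M k j.

Definition nontrivial_set (n : nat) (X : {set 'I_n}) : Prop :=
  (1 < #|X|)%N /\ X != setT.

Definition separable (R : ringType) (n : nat) (M : 'M[R]_n) : Prop :=
  exists X : {set 'I_n}, [/\ X != set0, ~: X != set0, clan M X & clan M (~: X)].

(* alpha-linear: some ordering x_1..x_n (a permutation s) with m_{x_i x_j} = alpha for i < j. *)
Definition alpha_linear (R : ringType) (n : nat) (M : 'M[R]_n) (alpha : R) : Prop :=
  exists s : 'S_n, forall i j : 'I_n, (i < j)%N -> M (s i) (s j) = alpha.

From mathcomp Require Import all_boot all_order all_algebra all_fingroup.
From mathcomp Require Import zify ring lra.
Set Implicit Arguments. Unset Strict Implicit. Unset Printing Implicit Defensive.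
Import Order.TTheory GRing.Theory Num.Theory.
Local Open Scope ring_scope.

(* As A and B have zero diagonal, their principal minors of orders 2 and 3 are
   -m_uv m_vu and the 3-cycle weights m_ab m_bd m_da + m_ad m_db m_ba, so these
   agree. Call M c-layered by r : [n] -> nat when m_uv = c whenever r u < r v;
   a separation {X, ~X} of A makes A c-layered by the indicator of ~X. The pair
   products force the entries of B between different layers into {c, 1 - c},
   hence B is layered in the same way when c = 1/2. Otherwise the 3-cycle weights
   show that c-entries of B compose through distinct layers; this orders every
   layer and layers B more finely. Exchanging A and B, the number of separated
   pairs grows until both layerings have the same classes. Each class is then a
   clan of A and of B: a class with two elements is a common nontrivial clan, and
   if all classes are singletons, A and B are both c-linear or both
   (1 - c)-linear. *)

Definition tournament (R : nzRingType) n (M : 'M[R]_n) :=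
  (forall i, M i i = 0) /\ (forall i j, i != j -> M i j + M j i = 1).

Lemma gen_tournament_tournament (R : realFieldType) n (M : 'M[R]_n) :
  gen_tournament M -> tournament M.
Proof.
case=> _ sumE; split => [i | i j ij].
- by have := congr1 (fun X : 'M[R]_n => X i i) sumE; rewrite !mxE eqxx /=; lra.
- by have := congr1 (fun X : 'M[R]_n => X i j) sumE; rewrite !mxE (negbTE ij) /=; lra.
Qed.

Lemma tournamentC (R : nzRingType) n (M : 'M[R]_n) u v :
  tournament M -> u != v -> M v u = 1 - M u v.
Proof. by case=> _ sum1 uv; rewrite -(sum1 _ _ uv) addrC addKr. Qed.

Lemma tournament_compl (R : nzRingType) n (M : 'M[R]_n) u v x :
  tournament M -> u != v -> M u v = 1 - x -> M v u = x.
Proof. by move=> tM uv Muv; rewrite (tournamentC tM uv) Muv opprB addrC subrK. Qed.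

Definition cycle3 (R : nzRingType) n (M : 'M[R]_n) a b d :=
  M a b * M b d * M d a + M a d * M d b * M b a.

Lemma cycle3_rot (R : comNzRingType) n (M : 'M[R]_n) a b d :
  cycle3 M a b d = cycle3 M b d a.
Proof. by rewrite /cycle3; ring. Qed.

Lemma cycle3_swap (R : comNzRingType) n (M : 'M[R]_n) a b d :
  cycle3 M a b d = cycle3 M a d b.
Proof. by rewrite /cycle3 addrC. Qed.

Lemma det_mx22 (R : comNzRingType) (A : 'M[R]_2) :
  \det A = A 0 0 * A 1 1 - A 0 1 * A 1 0.
Proof.
rewrite (expand_det_row _ 0) !big_ord_recr big_ord0 /= add0r /cofactor !det_mx11 !mxE /=.
pose B (p q : nat) := A (inord p) (inord q).
have BE (i j : 'I_2) : A i j = B i j by rewrite /B !inord_val.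
by rewrite !BE /= /bump /=; ring.
Qed.

Lemma det_mx33 (R : comNzRingType) (A : 'M[R]_3) : \det A =
  A 0 0 * A 1 1 * A 2 2 - A 0 0 * A 1 2 * A 2 1 - A 0 1 * A 1 0 * A 2 2
  + A 0 1 * A 1 2 * A 2 0 + A 0 2 * A 1 0 * A 2 1 - A 0 2 * A 1 1 * A 2 0.
Proof.
rewrite (expand_det_row _ 0) !big_ord_recr big_ord0 /= add0r /cofactor !det_mx22 !mxE /=.
pose B (p q : nat) := A (inord p) (inord q).
have BE (i j : 'I_3) : A i j = B i j by rewrite /B !inord_val.
by rewrite !BE /= /bump /=; ring.
Qed.

Lemma det_zero_diag2 (R : comNzRingType) k (A : 'M[R]_k) :
  k = 2 -> (forall i, A i i = 0) ->
  exists i j : 'I_k, i != j /\ \det A = - (A i j * A j i).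
Proof. by move=> k2 A0; subst k; exists 0, 1; rewrite det_mx22 !A0 mul0r sub0r. Qed.

Lemma det_zero_diag3 (R : comNzRingType) k (A : 'M[R]_k) :
  k = 3 -> (forall i, A i i = 0) ->
  exists i j l : 'I_k, [/\ i != j, i != l, j != l & \det A = cycle3 A i j l].
Proof.
by move=> k3 A0; subst k; exists 0, 1, 2; rewrite det_mx33 !A0 /cycle3; split=> //; ring.
Qed.

Lemma pair_product_set2 (R : comNzRingType) n (M : 'M[R]_n) u v x y :
  x \in [set u; v] -> y \in [set u; v] -> x != y -> M x y * M y x = M u v * M v u.
Proof.
by move=> /[!inE] /orP[]/eqP-> /orP[]/eqP->; rewrite ?eqxx // => _; ring.
Qed.

Lemma cycle3_set3 (R : comNzRingType) n (M : 'M[R]_n) a b d x y z :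
  x \in [set a; b; d] -> y \in [set a; b; d] -> z \in [set a; b; d] ->
  x != y -> x != z -> y != z -> cycle3 M x y z = cycle3 M a b d.
Proof.
move=> /[!inE] /orP[/orP[]|]/eqP-> /orP[/orP[]|]/eqP-> /orP[/orP[]|]/eqP->;
  rewrite ?eqxx // => *; rewrite /cycle3; ring.
Qed.

Lemma principal_submx_diag0 (R : nzRingType) n (M : 'M[R]_n) S :
  (forall i, M i i = 0) -> forall i, principal_submx M S i i = 0.
Proof. by move=> M0 i; rewrite mxE M0. Qed.

Lemma principal_minor2 (R : comNzRingType) n (M : 'M[R]_n) u v :
  (forall i, M i i = 0) -> u != v ->
  principal_minor M [set u; v] = - (M u v * M v u).
Proof.
rewrite /principal_minor => M0 uv; have card2 : #|[set u; v]| = 2 by rewrite cards2 uv.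
have [i [j [ij ->]]] := det_zero_diag2 card2 (principal_submx_diag0 M0).
rewrite !mxE (pair_product_set2 _ (enum_valP i) (enum_valP j)) //.
by apply: contra ij => /eqP/enum_val_inj->.
Qed.

Lemma card_set3 (T : finType) (a b d : T) :
  a != b -> a != d -> b != d -> #|[set a; b; d]| = 3.
Proof. by move=> ab ad bd; rewrite -setUA cardsU1 cards2 bd !inE negb_or ab ad. Qed.

Lemma principal_minor3 (R : comNzRingType) n (M : 'M[R]_n) a b d :
  (forall i, M i i = 0) -> a != b -> a != d -> b != d ->
  principal_minor M [set a; b; d] = cycle3 M a b d.
Proof.
rewrite /principal_minor => M0 ab ad bd.
have card3 := card_set3 ab ad bd.
have [i [j [l [ij il jl ->]]]] := det_zero_diag3 card3 (principal_submx_diag0 M0).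
have val_neq (x y : 'I_#|[set a; b; d]|) : x != y -> enum_val x != enum_val y.
  by apply: contra => /eqP/enum_val_inj->.
rewrite /cycle3 !mxE -/(cycle3 M _ _ _).
by apply: cycle3_set3; rewrite ?val_neq ?enum_valP.
Qed.

Definition layered (R : nzRingType) n (M : 'M[R]_n) (c : R) (r : 'I_n -> nat) :=
  forall u v, (r u < r v)%N -> M u v = c.

Lemma layer_neq n (r : 'I_n -> nat) u v : r u <> r v -> u != v.
Proof. by apply: contra_not_neq => ->. Qed.

Section Layered.

Variables (R : comNzRingType) (n : nat) (M : 'M[R]_n) (c : R) (r : 'I_n -> nat).
Hypotheses (tM : tournament M) (lM : layered M c r).

Lemma layered_gt u v : (r u < r v)%N -> M v u = 1 - c.
Proof.
move=> ruv; have uv : u != v by apply: contraTneq ruv => ->; rewrite ltnn.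
by rewrite (tournamentC tM uv) lM.
Qed.

Lemma layered_offE u v : r u <> r v -> M u v = if (r u < r v)%N then c else 1 - c.
Proof. by case: ltngtP => // [/lM | /layered_gt]. Qed.

Lemma clan_layer m : clan M [set w | r w == m].
Proof.
move=> i j k /[!inE] /eqP ri /eqP rj /eqP rk.
have rik : r i <> r k by rewrite ri; apply: nesym.
have rjk : r j <> r k by rewrite rj; apply: nesym.
rewrite (layered_offE rik) (layered_offE rjk) (layered_offE (nesym rik)).
by rewrite (layered_offE (nesym rjk)) ri rj.
Qed.

Lemma layered_pair u v : r u <> r v -> M u v * M v u = c * (1 - c).
Proof.
move=> ruv; rewrite (layered_offE ruv) (layered_offE (nesym ruv)).
by case: (ltngtP (r u) (r v)) => [_ | _ | /ruv]; rewrite // mulrC.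
Qed.

Lemma cycle3_same_layer a b d :
  a != b -> r a = r b -> r d <> r a -> cycle3 M a b d = c * (1 - c).
Proof.
move=> ab rab rda; have rdb : r d <> r b by rewrite -rab.
rewrite /cycle3 (tournamentC tM ab) (layered_offE (nesym rdb)) (layered_offE rda).
rewrite (layered_offE (nesym rda)) (layered_offE rdb) rab.
by case: (ltngtP (r b) (r d)) => [_|_|bd]; [ring | ring | case: rdb].
Qed.

Lemma cycle3_layered a b d : a != b -> a != d -> b != d ->
  ~ (r a = r b /\ r b = r d) -> cycle3 M a b d = c * (1 - c).
Proof.
move=> ab ad bd not_flat.
have [rab|/eqP rab] := eqVneq (r a) (r b).
  by apply: cycle3_same_layer => // rda; apply: not_flat; split; congruence.
have [rad|/eqP rad] := eqVneq (r a) (r d).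
  by rewrite cycle3_swap; apply: cycle3_same_layer => //; apply: nesym.
have [rbd|/eqP rbd] := eqVneq (r b) (r d).
  by rewrite cycle3_rot; apply: cycle3_same_layer.
rewrite /cycle3 (layered_offE rab) (layered_offE rbd) (layered_offE (nesym rad)).
rewrite (layered_offE rad) (layered_offE (nesym rbd)) (layered_offE (nesym rab)).
case: (ltngtP (r a) (r b)) => ?; case: (ltngtP (r b) (r d)) => ?;
  by case: (ltngtP (r a) (r d)) => ?; try lia; ring.
Qed.

End Layered.

Definition flip_rank n (r : 'I_n -> nat) u := (\max_w r w - r u)%N.

Lemma flip_rank_inj n (r : 'I_n -> nat) : injective r -> injective (flip_rank r).
Proof.
move=> r_inj u v; rewrite /flip_rank => ruv; apply: r_inj.
by have := leq_bigmax (F := r) u; have := leq_bigmax (F := r) v; lia.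
Qed.

Lemma layered_flip (R : comNzRingType) n (M : 'M[R]_n) c r :
  tournament M -> layered M c r -> layered M (1 - c) (flip_rank r).
Proof.
move=> tM lM u v; rewrite /flip_rank => ruv; apply: layered_gt tM lM _ _ _.
by have := leq_bigmax (F := r) u; have := leq_bigmax (F := r) v; lia.
Qed.

Section Position.

Variables (n : nat) (g : 'I_n -> nat).

Lemma position_subproof u : (#|[set w | (g w < g u)%N]| < n)%N.
Proof.
have := @proper_card _ [set w | (g w < g u)%N] setT; rewrite cardsT card_ord; apply.
by rewrite properT; apply/eqP => allE; have := in_setT u; rewrite -allE inE ltnn.
Qed.

Definition position u : 'I_n := Ordinal (position_subproof u).

Lemma position_mono u v : (g u < g v)%N -> (position u < position v)%N.
Proof.
move=> guv; apply: proper_card; apply/properP; split.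
- by apply/subsetP => w /[!inE] /ltn_trans; apply.
- by exists u; rewrite !inE ?guv ?ltnn.
Qed.

Hypothesis g_inj : injective g.

Lemma position_ltE u v : (position u < position v)%N = (g u < g v)%N.
Proof.
apply/idP/idP => [puv | /position_mono //]; rewrite ltnNge leq_eqVlt.
apply/negP => /orP[/eqP/g_inj vu | /position_mono/ltnW]; first by rewrite vu ltnn in puv.
by rewrite leqNgt puv.
Qed.

Lemma position_inj : injective position.
Proof.
move=> u v puv; apply/g_inj/anti_leq.
have := position_ltE u v; have := position_ltE v u; rewrite puv ltnn.
by move=> /esym/negbT; rewrite -leqNgt => -> /esym/negbT; rewrite -leqNgt => ->.
Qed.

Lemma layered_linear (R : nzRingType) (M : 'M[R]_n) c : layered M c g -> alpha_linear M c.
Proof.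
move=> lM; exists (perm position_inj)^-1%g => i j ij; apply: lM.
by rewrite -position_ltE -!(permE position_inj) !permKV.
Qed.

End Position.

Lemma layered_injective_linear (R : realFieldType) n (M N : 'M[R]_n) c r1 r2 :
  tournament M -> tournament N -> layered M c r1 -> layered N c r2 ->
  injective r1 -> injective r2 -> c != 1 - c ->
  exists alpha, 1 / 2 < alpha /\ alpha_linear M alpha /\ alpha_linear N alpha.
Proof.
move=> tM tN lM lN r1_inj r2_inj c_neq.
have [c_lt|c_gt|c_half] := ltrgtP c (1 / 2).
- exists (1 - c); split; first lra.
  split; [apply: (layered_linear (flip_rank_inj r1_inj))
         | apply: (layered_linear (flip_rank_inj r2_inj))]; exact: layered_flip.
- exists c; split => //.
  by split; [apply: (layered_linear r1_inj) | apply: (layered_linear r2_inj)].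
- by move/eqP: c_neq; rewrite c_half; lra.
Qed.

Section Refinement.

Variables (R : idomainType) (n : nat) (M N : 'M[R]_n) (c : R) (r : 'I_n -> nat).
Hypotheses (tM : tournament M) (tN : tournament N) (lM : layered M c r).
Hypothesis pair_NM : forall u v, u != v -> N u v * N v u = M u v * M v u.

Lemma off_layer_entry u v : r u <> r v -> N u v = c \/ N u v = 1 - c.
Proof.
move=> ruv; have uv := layer_neq ruv.
have := pair_NM uv; rewrite (layered_pair tM lM ruv) (tournamentC tN uv) => prodE.
have : (N u v - c) * (N u v - (1 - c)) = c * (1 - c) - N u v * (1 - N u v) by ring.
by rewrite prodE subrr => /eqP; rewrite mulf_eq0 !subr_eq0 => /orP[]/eqP; [left | right].
Qed.

Lemma layered_half : c = 1 - c -> layered N c r.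
Proof.
move=> half u v ruv; have /off_layer_entry : r u <> r v by move/eqP; rewrite ltn_eqF.
by rewrite -half => -[].
Qed.

Hypothesis cycle3_NM :
  forall a b d, a != b -> a != d -> b != d -> cycle3 N a b d = cycle3 M a b d.
Hypothesis c_neq : c != 1 - c.

Lemma entry_c_asym u v : u != v -> N u v = c -> N v u != c.
Proof. by move=> uv Nuv; rewrite (tournamentC tN uv) Nuv eq_sym. Qed.

Lemma off_layer_trans a b d : a != b -> a != d -> b != d ->
  ~ (r a = r b /\ r b = r d) -> N a b = c -> N b d = c -> N a d = c.
Proof.
move=> ab ad bd not_flat Nab Nbd.
have := cycle3_NM ab ad bd; rewrite (cycle3_layered tM lM ab ad bd not_flat) /cycle3.
rewrite (tournamentC tN ad) (tournamentC tN bd) (tournamentC tN ab) Nab Nbd => cycleE.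
have : (N a d - c) * ((1 - c) - c) = c * c * (1 - N a d) + N a d * (1 - c) * (1 - c)
  - c * (1 - c) by ring.
rewrite cycleE subrr => /eqP; rewrite mulf_eq0 !subr_eq0 [1 - c == c]eq_sym.
by rewrite (negbTE c_neq) orbF => /eqP.
Qed.

Definition below u v := [&& u != v, N u v == c &
  (r u != r v) || [exists z, [&& r z != r u, N u z == c & N z v == c]]].

Lemma below_cross u v : r u <> r v -> N u v = c -> below u v.
Proof. by move=> ruv Nuv; rewrite /below (layer_neq ruv) Nuv eqxx (introN eqP ruv). Qed.

Lemma below_via u v z : u != v -> z != v -> r z <> r u ->
  N u z = c -> N z v = c -> below u v.
Proof.
move=> uv zv rzu Nuz Nzv.
have uz : u != z by rewrite eq_sym (layer_neq rzu).
have Nuv : N u v = c.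
  by apply: off_layer_trans uz uv zv _ Nuz Nzv => -[ruz _]; exact: rzu (esym ruz).
rewrite /below uv Nuv eqxx /=; apply/orP; right; apply/existsP; exists z.
by rewrite Nuz Nzv !eqxx !andbT; apply/eqP.
Qed.

Lemma below_asym u v : below u v -> ~~ below v u.
Proof.
case/and3P=> uv /eqP Nuv _; apply/negP => /and3P[_ /eqP Nvu _].
by move: (entry_c_asym uv Nuv); rewrite Nvu eqxx.
Qed.

Lemma below_total u v : r u <> r v -> below u v || below v u.
Proof.
move=> ruv; apply/orP; case: (off_layer_entry ruv) => Nuv; [left | right].
  exact: below_cross.
exact: below_cross (nesym ruv) (tournament_compl tN (layer_neq ruv) Nuv).
Qed.

Lemma below_trans a b d : below a b -> below b d -> below a d.
Proof.
move=> /[dup] lab /and3P[ab /eqP Nab lab'] /[dup] lbd /and3P[bd /eqP Nbd _].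
have ad : a != d by apply: contraTneq lbd => <-; apply: below_asym.
have [/andP[/eqP rab /eqP rbd] | not_flat] := boolP ((r a == r b) && (r b == r d)).
  move: lab'; rewrite rab eqxx /= => /existsP[z /and3P[/eqP rzb /eqP Naz /eqP Nzb]].
  have rzd : r z <> r d by rewrite -rbd.
  have zd := layer_neq rzd; have bz : b != z by rewrite eq_sym (layer_neq rzb).
  have Nzd : N z d = c.
    case: (off_layer_entry rzd) => // Nzd.
    have Ndz := tournament_compl tN zd Nzd.
    have Nbz : N b z = c.
      apply: off_layer_trans bd bz _ _ Nbd Ndz; first by rewrite eq_sym.
      by move=> [_ rdz]; exact: rzd (esym rdz).
    by move: (entry_c_asym bz Nbz); rewrite Nzb eqxx.
  by apply: below_via ad zd _ Naz Nzd; rewrite rab.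
have Nad : N a d = c.
  by apply: off_layer_trans ab ad bd _ Nab Nbd => -[rab rbd]; rewrite rab rbd !eqxx in not_flat.
have [rad | rad] := eqVneq (r a) (r d); last by apply: below_cross => //; apply/eqP.
apply: below_via ad bd _ Nab Nbd => rba.
by rewrite -rad rba !eqxx in not_flat.
Qed.

Lemma incomparable_same_layer u v : ~~ below u v -> ~~ below v u -> r u = r v.
Proof.
move=> nuv nvu; case: (eqVneq (r u) (r v)) => // /eqP ruv.
by move: (below_total ruv); rewrite (negbTE nuv) (negbTE nvu).
Qed.

Lemma incomparable_entry u v z :
  ~~ below u v -> ~~ below v u -> r z <> r u -> N z u = N z v.
Proof.
move=> nuv nvu rzu; have [-> // | uv] := eqVneq u v.
have rzv : r z <> r v by rewrite -(incomparable_same_layer nuv nvu).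
have [zu zv] := (layer_neq rzu, layer_neq rzv).
case: (off_layer_entry rzu) => Nzu; case: (off_layer_entry rzv) => Nzv; rewrite ?Nzu ?Nzv //.
- have vu : v != u by rewrite eq_sym.
  by have := below_via vu zu rzv (tournament_compl tN zv Nzv) Nzu; rewrite (negbTE nvu).
- by have := below_via uv zv rzu (tournament_compl tN zu Nzu) Nzv; rewrite (negbTE nuv).
Qed.

Lemma below_incomparable z u v : below z u -> ~~ below u v -> ~~ below v u -> below z v.
Proof.
move=> /[dup] lzu /and3P[zu /eqP Nzu lzu'] nuv nvu.
have zv : z != v by apply: contraNneq nvu => <-.
have ruv := incomparable_same_layer nuv nvu.
have [rzu | /eqP rzu] := eqVneq (r z) (r u).
  move: lzu'; rewrite rzu eqxx /= => /existsP[w /and3P[/eqP rwu /eqP Nzw /eqP Nwu]].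
  have Nwv : N w v = c by rewrite -(incomparable_entry nuv nvu rwu).
  have rwv : r w <> r v by rewrite -ruv.
  by apply: below_via zv (layer_neq rwv) _ Nzw Nwv; rewrite rzu.
apply: below_cross; first by rewrite -ruv.
by rewrite -(incomparable_entry nuv nvu rzu).
Qed.

Definition below_rank u := #|[set w | below w u]|.

Lemma below_rank_lt u v : below u v -> (below_rank u < below_rank v)%N.
Proof.
move=> luv; apply: proper_card; apply/properP; split.
  by apply/subsetP => w; rewrite !inE => /below_trans; apply.
by exists u; rewrite !inE // /below eqxx.
Qed.

Lemma below_rank_eq u v : ~~ below u v -> ~~ below v u -> below_rank u = below_rank v.
Proof.
move=> nuv nvu; apply: eq_card => w; rewrite !inE.
by apply/idP/idP => /below_incomparable; apply.
Qed.

Lemma layered_below_rank : layered N c below_rank.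
Proof.
move=> u v ruv; have [/and3P[_ /eqP // _] | nuv] := boolP (below u v).
have [lvu | nvu] := boolP (below v u).
  by have := below_rank_lt lvu; rewrite ltnNge ltnW.
by move: ruv; rewrite (below_rank_eq nuv nvu) ltnn.
Qed.

Lemma below_rank_refines u v : below_rank u = below_rank v -> r u = r v.
Proof.
move=> ruv; have [luv | nuv] := boolP (below u v).
  by have := below_rank_lt luv; rewrite ruv ltnn.
have [lvu | nvu] := boolP (below v u).
  by have := below_rank_lt lvu; rewrite ruv ltnn.
exact: incomparable_same_layer.
Qed.

End Refinement.

Definition separated n (r : 'I_n -> nat) := #|[set p : 'I_n * 'I_n | r p.1 != r p.2]|.

Lemma separated_le n (r : 'I_n -> nat) : (separated r <= n * n)%N.
Proof. by rewrite /separated (leq_trans (max_card _)) // card_prod card_ord. Qed.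

Lemma separated_refines n (r r' : 'I_n -> nat) :
  (forall u v, r' u = r' v -> r u = r v) -> (separated r' <= separated r)%N ->
  forall u v, r u = r v -> r' u = r' v.
Proof.
move=> refines le_sep u v ruv.
have sub : [set p | r p.1 != r p.2] \subset [set p | r' p.1 != r' p.2].
  by apply/subsetP => p; rewrite !inE; apply: contra => /eqP/refines->.
have /eqP sepE : [set p | r p.1 != r p.2] == [set p | r' p.1 != r' p.2].
  by rewrite eqEcard sub.
case: (eqVneq (r' u) (r' v)) => // r'uv.
have : (u, v) \in [set p | r' p.1 != r' p.2] by rewrite inE.
by rewrite -sepE inE ruv eqxx.
Qed.

Lemma common_layering (R : idomainType) n (M N : 'M[R]_n) c r :
  tournament M -> tournament N ->
  (forall u v, u != v -> N u v * N v u = M u v * M v u) ->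
  (forall a b d, a != b -> a != d -> b != d -> cycle3 N a b d = cycle3 M a b d) ->
  c != 1 - c -> layered M c r ->
  exists r1 r2, [/\ layered M c r1, layered N c r2,
    forall u v, r1 u = r1 v <-> r2 u = r2 v & forall u v, r u <> r v -> r1 u <> r1 v].
Proof.
move=> + + + + c_neq; move Ek : (n * n - separated r)%N => k.
elim/ltn_ind: k M N r Ek => k IH M N r Ek tM tN pair_NM cycle3_NM lM.
have lN := layered_below_rank tM tN lM pair_NM cycle3_NM c_neq.
have refines := below_rank_refines tM tN lM pair_NM cycle3_NM c_neq.
set r' := below_rank N c r in lN refines.
have [le_sep | lt_sep] := leqP (separated r') (separated r).
  exists r, r'; split => // u v; split; [exact: separated_refines | exact: refines].
have pair_MN u v (uv : u != v) := esym (pair_NM u v uv).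
have cycle3_MN a b d (ab : a != b) (ad : a != d) (bd : b != d) :=
  esym (cycle3_NM a b d ab ad bd).
have lt_k : (n * n - separated r' < k)%N by have := separated_le r'; lia.
have [r1 [r2 [lN1 lM2 same refines']]] := IH _ lt_k N M r' erefl tN tM pair_MN cycle3_MN lN.
exists r2, r1; split => // u v; first exact: iff_sym.
move=> ruv; have /refines' r1uv : r' u <> r' v by move/refines.
by move/same.
Qed.

Lemma common_clan_or_injective (R : comNzRingType) n (M N : 'M[R]_n) c r1 r2 u0 v0 :
  tournament M -> tournament N -> layered M c r1 -> layered N c r2 ->
  (forall u v, r1 u = r1 v <-> r2 u = r2 v) -> r1 u0 <> r1 v0 ->
  (exists X, [/\ nontrivial_set X, clan M X & clan N X]) \/ injective r1.
Proof.
move=> tM tN lM lN same r1uv0.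
have [/existsP[u /existsP[v /andP[uv /eqP r1uv]]] | r1_inj] :=
  boolP [exists u, exists v, (u != v) && (r1 u == r1 v)]; last first.
  right => u v r1uv; apply/eqP; apply: contraNT r1_inj => uv.
  by apply/existsP; exists u; apply/existsP; exists v; rewrite uv r1uv eqxx.
left; exists [set w | r1 w == r1 u]; split.
- split; first by apply/card_gt1P; exists u, v; rewrite !inE r1uv !eqxx.
  apply/eqP => layerT; apply: r1uv0.
  by have := in_setT u0; have := in_setT v0; rewrite -layerT !inE => /eqP-> /eqP->.
- exact: clan_layer tM lM _.
- have -> : [set w | r1 w == r1 u] = [set w | r2 w == r2 u].
    by apply/setP => w; rewrite !inE; apply/eqP/eqP => /same.
  exact: clan_layer tN lN _.
Qed.

Lemma separation_layered (R : nzRingType) n (M : 'M[R]_n) X x y :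
  clan M X -> clan M (~: X) -> x \in X -> y \notin X ->
  layered M (M x y) (fun u => (u \notin X : nat)).
Proof.
move=> clX clCX xX yX u v.
case: (boolP (u \in X)) => uX; case: (boolP (v \in X)) => vX //= _.
rewrite (clX u x v uX xX vX).1.
by apply: (clCX v y x _ _ _).2; rewrite !inE ?negbK.
Qed.

Theorem proposition5p8 (R : realFieldType) (n : nat) (A B : 'M[R]_n) :
  (3 <= n)%N ->
  gen_tournament A -> gen_tournament B ->
  (forall S : {set 'I_n}, (#|S| <= 4)%N -> principal_minor A S = principal_minor B S) ->
  separable A ->
  ~ (exists alpha : R, 1 / 2 < alpha /\ alpha_linear A alpha /\ alpha_linear B alpha) ->
  exists X : {set 'I_n}, [/\ nontrivial_set X, clan A X & clan B X].
Proof.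
move=> n_ge3 /gen_tournament_tournament tA /gen_tournament_tournament tB minorsE.
move=> [X [/set0Pn[x xX] /set0Pn[y /[!inE] yX] clX clCX]] not_linear.
have [[A0 _] [B0 _]] := (tA, tB).
have pair_BA u v : u != v -> B u v * B v u = A u v * A v u.
  move=> uv; apply: oppr_inj; rewrite -!principal_minor2 // minorsE //.
  by rewrite cards2 uv.
have cycle3_BA a b d : a != b -> a != d -> b != d -> cycle3 B a b d = cycle3 A a b d.
  by move=> ab ad bd; rewrite -!principal_minor3 // minorsE // card_set3.
have lA := separation_layered clX clCX xX yX.
have sep : (x \notin X : nat) <> (y \notin X) by rewrite xX yX.
have [half | c_neq] := eqVneq (A x y) (1 - A x y).
  have lB := layered_half tA tB lA pair_BA half.
  have [// | r_inj] := common_clan_or_injective tA tB lA lB (fun u v => iff_refl _) sep.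
  have /leq_card : injective (fun u => u \notin X) by move=> u v /(congr1 nat_of_bool)/r_inj.
  by rewrite card_ord card_bool; lia.
have [r1 [r2 [l1 l2 same refines]]] := common_layering tA tB pair_BA cycle3_BA c_neq lA.
have [// | r1_inj] := common_clan_or_injective tA tB l1 l2 same (refines _ _ sep).
have r2_inj : injective r2 by move=> u v /same/r1_inj.
by case: not_linear; apply: layered_injective_linear r1_inj r2_inj c_neq.
Qed.
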